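(* Let $G\in\mathcal{C}$, let $H$ be a hole of $G$, and let $u,v\in V(G)\setminus V(H)$ each be either a major vertex or a clone for $H$. Suppose $u$ and $v$ are nested with respect to $H$ and $uv\in E(G)$. Then $u$ and $v$ have a common neighbor in $H$.
   Context: All graphs are finite and simple; paths are induced paths; a hole is an induced cycle of length at least four. $\mathcal{C}$ is the class of graphs containing no theta, pyramid, prism or turtle as an induced subgraph, where: a theta consists of two nonadjacent vertices $a,b$ and three paths from $a$ to $b$, otherwise vertex-disjoint, any two of which induce a hole; a pyramid consists of a vertex $a$, a triangle $\{b_1,b_2,b_3\}$ and paths $P_i$ from $a$ to $b_i$, pairwise disjoint except at $a$, any two of which induce a hole; a prism consists of two disjoint triangles $\{a_1,a_2,a_3\},\{b_1,b_2,b_3\}$ and pairwise disjoint paths $P_i$ from $a_i$ to $b_i$, any two of which induce a hole; a turtle consists of disjoint paths $P_1$ (from $a_1$ to $b_1$), $P_2$ (from $a_2$ to $b_2$) with $a_1a_2,b_1b_2$ edges and $V(P_1)\cup V(P_2)$ inducing a hole, plus adjacent vertices $x,y$ where $x$ has at least three neighbors in $P_1$ and none in $P_2$, and $y$ has at least three neighbors in $P_2$ and none in $P_1$. For a hole $H$ and $u\notin V(H)$, $N_H(u)$ is the set of neighbors of $u$ in $H$. A vertex $u\notin V(H)$ is minor for $H$ if $N_H(u)\neq\emptyset$ and $N_H(u)$ is contained in the vertex set of some three-vertex subpath of $H$; it is major for $H$ if $N_H(u)\ne\emptyset$ and $u$ is not minor. A vertex $u\notin V(H)$ is a clone of $y\in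 V(H)$ if $N_H(u)=\{x,y,z\}$ where $x\text{-}y\text{-}z$ is a subpath of $H$. Two vertices $u,v\notin V(H)$ are nested with respect to $H$ if there exist distinct $a,b\in V(H)$ such that one of the two $a$–$b$ paths of $H$ contains all neighbors of $u$ in $H$ and the other contains all neighbors of $v$ in $H$. *)

(* Finite simple graphs: vertex type T : finType, adjacency
   e : rel T (assumed symmetric and irreflexive in the theorem). *)
From mathcomp Require Import all_boot.
Set Implicit Arguments. Unset Strict Implicit. Unset Printing Implicit Defensive.

Definition cyc (T : Type) (c : seq T) (d : T) (k : nat) : T := nth d c (k %% size c).

Definition is_path (T : finType) (e : rel T) (p : seq T) : Prop :=
  p <> [::] /\ uniq p /\
  forall (x0 : T) (i j : nat), i < size p -> j < size p ->
    (e (nth x0 p i) (nth x0 p j) <-> (i = j.+1 \/ j = i.+1)).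

Definition path_ab (T : finType) (e : rel T) (p : seq T) (a b : T) : Prop :=
  is_path e p /\ head a p = a /\ last a p = b.

Definition is_hole (T : finType) (e : rel T) (c : seq T) : Prop :=
  4 <= size c /\ uniq c /\
  forall (x0 : T) (i j : nat), i < size c -> j < size c ->
    (e (nth x0 c i) (nth x0 c j) <->
       (i = j.+1 %% size c \/ j = i.+1 %% size c)).

Definition induces_hole (T : finType) (e : rel T) (s : seq T) : Prop :=
  exists c : seq T, is_hole e c /\ c =i s.

Definition has_theta (T : finType) (e : rel T) : Prop :=
  exists (a b : T) (P1 P2 P3 : seq T),
    a <> b /\ ~~ e a b /\
    path_ab e P1 a b /\ path_ab e P2 a b /\ path_ab e P3 a b /\
    (forall x, x \in P1 -> x \in P2 -> x = a \/ x = b) /\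
    (forall x, x \in P1 -> x \in P3 -> x = a \/ x = b) /\
    (forall x, x \in P2 -> x \in P3 -> x = a \/ x = b) /\
    induces_hole e (P1 ++ P2) /\ induces_hole e (P1 ++ P3) /\
    induces_hole e (P2 ++ P3).

Definition has_pyramid (T : finType) (e : rel T) : Prop :=
  exists (a b1 b2 b3 : T) (P1 P2 P3 : seq T),
    e b1 b2 /\ e b1 b3 /\ e b2 b3 /\
    path_ab e P1 a b1 /\ path_ab e P2 a b2 /\ path_ab e P3 a b3 /\
    (forall x, x \in P1 -> x \in P2 -> x = a) /\
    (forall x, x \in P1 -> x \in P3 -> x = a) /\
    (forall x, x \in P2 -> x \in P3 -> x = a) /\
    induces_hole e (P1 ++ P2) /\ induces_hole e (P1 ++ P3) /\
    induces_hole e (P2 ++ P3).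

Definition has_prism (T : finType) (e : rel T) : Prop :=
  exists (a1 a2 a3 b1 b2 b3 : T) (P1 P2 P3 : seq T),
    e a1 a2 /\ e a1 a3 /\ e a2 a3 /\
    e b1 b2 /\ e b1 b3 /\ e b2 b3 /\
    [disjoint [:: a1; a2; a3] & [:: b1; b2; b3]] /\
    path_ab e P1 a1 b1 /\ path_ab e P2 a2 b2 /\ path_ab e P3 a3 b3 /\
    [disjoint P1 & P2] /\ [disjoint P1 & P3] /\ [disjoint P2 & P3] /\
    induces_hole e (P1 ++ P2) /\ induces_hole e (P1 ++ P3) /\
    induces_hole e (P2 ++ P3).

Definition has_turtle (T : finType) (e : rel T) : Prop :=
  exists (a1 b1 a2 b2 x y : T) (P1 P2 : seq T),
    path_ab e P1 a1 b1 /\ path_ab e P2 a2 b2 /\ [disjoint P1 & P2] /\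
    e a1 a2 /\ e b1 b2 /\ induces_hole e (P1 ++ P2) /\
    x \notin P1 ++ P2 /\ y \notin P1 ++ P2 /\ e x y /\
    3 <= count (e x) P1 /\ ~~ has (e x) P2 /\
    3 <= count (e y) P2 /\ ~~ has (e y) P1.

Definition in_C (T : finType) (e : rel T) : Prop :=
  ~ has_theta e /\ ~ has_pyramid e /\ ~ has_prism e /\ ~ has_turtle e.

Definition has_nbr_in (T : finType) (e : rel T) (c : seq T) (u : T) : Prop :=
  exists x, x \in c /\ e u x.

Definition minor (T : finType) (e : rel T) (c : seq T) (u : T) : Prop :=
  has_nbr_in e c u /\
  exists i, i < size c /\
    forall x, x \in c -> e u x ->
      x = cyc c u i \/ x = cyc c u i.+1 \/ x = cyc c u i.+2.

Definition major (T : finType) (e : rel T) (c : seq T) (u : T) : Prop :=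
  has_nbr_in e c u /\ ~ minor e c u.

Definition clone_of (T : finType) (e : rel T) (c : seq T) (u y : T) : Prop :=
  exists i, i < size c /\ y = cyc c u i.+1 /\
    forall x, (x \in c /\ e u x) <->
      (x = cyc c u i \/ x = cyc c u i.+1 \/ x = cyc c u i.+2).

Definition is_clone (T : finType) (e : rel T) (c : seq T) (u : T) : Prop :=
  exists y, y \in c /\ clone_of e c u y.

(* vertices of the path of the hole c going forward from c_i to c_j *)
Definition arc (T : Type) (c : seq T) (d : T) (i j : nat) (x : T) : Prop :=
  exists k, k <= (j + size c - i) %% size c /\ x = cyc c d (i + k).

Definition nested (T : finType) (e : rel T) (c : seq T) (u v : T) : Prop :=
  exists i j, i < size c /\ j < size c /\ i <> j /\
    (forall x, x \in c -> e u x -> arc c u i j x) /\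
    (forall x, x \in c -> e v x -> arc c u j i x).

From mathcomp Require Import all_boot.
From mathcomp Require Import zify.
Set Implicit Arguments. Unset Strict Implicit. Unset Printing Implicit Defensive.

(* Suppose they have none.
   1. Each of u, v has at least three neighbours in H: a clone has exactly
      three, and a major vertex with at most two would be minor unless its two
      neighbours are nonadjacent, in which case it forms a theta with H.
   2. Being nested without common neighbours, u and v split H into two
      consecutive paths P and Q with N_H(u) on P and N_H(v) on Q.
   3. Then P, Q, u and v form a turtle, which graphs in C do not contain. *)

Lemma addn_modn_inj n k a b : a < n -> b < n -> (k + a) %% n = (k + b) %% n -> a = b.
Proof. by move=> ha hb /eqP; rewrite eqn_modDl !modn_small // => /eqP. Qed.

Lemma modnS_mod a n : (a %% n).+1 %% n = a.+1 %% n.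
Proof. by rewrite -addn1 modnDml addn1. Qed.

Lemma modn_sub_big x n : n <= x -> x < n + n -> x %% n = x - n.
Proof. move=> h1 h2; have -> : x = (x - n) + n by lia. rewrite modnDr modn_small; lia. Qed.

Section CyclicIndexing.
(* Positions on a cyclic sequence c are natural numbers read modulo size c. *)
Variables (T : eqType) (c : seq T) (d : T).

Lemma cyc_eqmod a b : a %% size c = b %% size c -> cyc c d a = cyc c d b.
Proof. by rewrite /cyc => ->. Qed.

Lemma cyc_in a : 0 < size c -> cyc c d a \in c.
Proof. by move=> h; rewrite /cyc mem_nth // ltn_pmod. Qed.

Lemma cyc_inj a b : uniq c -> 0 < size c ->
  cyc c d a = cyc c d b -> a %% size c = b %% size c.
Proof. by move=> u h /eqP; rewrite /cyc nth_uniq ?ltn_pmod // => /eqP. Qed.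

Lemma cyc_offset_neq k a b : uniq c -> a < size c -> b < size c -> a != b ->
  cyc c d (k + a) != cyc c d (k + b).
Proof.
move=> hu ha hb hab; apply/negP=> /eqP /(cyc_inj hu) h.
have h0 : 0 < size c by case: (size c) ha.
by move: hab; rewrite (addn_modn_inj ha hb (h h0)) eqxx.
Qed.

Lemma in_cyc x k : x \in c -> exists2 t, t < size c & x = cyc c d (k + t).
Proof.
move=> hx; have h0 : 0 < size c by case: (c) hx.
set n := size c; set p := index x c.
have hp : p < n by rewrite index_mem.
exists ((p + (n - k %% n)) %% n); first by rewrite ltn_pmod.
rewrite /cyc -/n modnDmr.
have -> : k + (p + (n - k %% n)) = (k %/ n) * n + n + p.
  have := divn_eq k n; have := ltn_pmod k h0; lia.
by rewrite -addnA modnMDl addnC modnDr modn_small // nth_index.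
Qed.

Definition win k m := mkseq (fun t => cyc c d (k + t)) m.

Lemma size_win k m : size (win k m) = m.
Proof. by rewrite size_mkseq. Qed.

Lemma nth_win x0 k m t : t < m -> nth x0 (win k m) t = cyc c d (k + t).
Proof. by move=> h; rewrite nth_mkseq. Qed.

Lemma head_win x0 k m : 0 < m -> head x0 (win k m) = cyc c d k.
Proof. by move=> h; rewrite -nth0 nth_win ?addn0. Qed.

Lemma last_win x0 k m : 0 < m -> last x0 (win k m) = cyc c d (k + m.-1).
Proof. by move=> h; rewrite -nth_last size_win nth_win // prednK. Qed.

Lemma win1 k : win k 1 = [:: cyc c d k].
Proof. by rewrite /win /mkseq /= addn0. Qed.

Lemma mem_win k m x : x \in win k m <-> exists2 t, t < m & x = cyc c d (k + t).
Proof.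
split; first by case/mapP=> t; rewrite mem_iota add0n => ht ->; exists t.
by case=> t ht ->; apply/mapP; exists t; rewrite // mem_iota.
Qed.

Lemma win_sub k m x : 0 < size c -> x \in win k m -> x \in c.
Proof. by move=> h /mem_win [t _ ->]; apply: cyc_in. Qed.

Lemma win_uniq k m : uniq c -> m <= size c -> uniq (win k m).
Proof.
move=> hu hm; case: m hm => [|m] hm //.
have h0 : 0 < size c by lia.
rewrite /win /mkseq map_inj_in_uniq ?iota_uniq // => a b.
rewrite !mem_iota !add0n => ha hb /(cyc_inj hu h0); apply: addn_modn_inj; lia.
Qed.

Lemma win_cat k m r : win k (m + r) = win k m ++ win (k + m) r.
Proof.
rewrite /win /mkseq iotaD map_cat add0n; congr (_ ++ _).
rewrite -[m in iota m]addn0 iotaDl -map_comp; apply: eq_map => t /=.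
by rewrite addnA.
Qed.

Lemma win_disjoint k m r x : uniq c -> m + r <= size c ->
  x \in win k m -> x \in win (k + m) r -> False.
Proof.
move=> hu hmr /mem_win [s hs ->] /mem_win [t ht].
have h0 : 0 < size c by lia.
move/(cyc_inj hu h0); rewrite -addnA => /addn_modn_inj h.
by have := h ltac:(lia) ltac:(lia); lia.
Qed.

Lemma win_cover k m : 0 < size c -> m <= size c ->
  c =i win k m ++ win (k + m) (size c - m).
Proof.
move=> h0 hm x; rewrite -win_cat subnKC //; apply/idP/idP; last exact: win_sub.
by move=> hx; apply/mem_win; apply: in_cyc.
Qed.

Lemma win_S k m : win k m.+1 = win k m ++ [:: cyc c d (k + m)].
Proof. by rewrite -win1 -win_cat addn1. Qed.

Lemma cyc_round k r : r <= size c -> cyc c d (k + r + (size c - r)) = cyc c d k.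
Proof. by move=> hr; apply: cyc_eqmod; rewrite -addnA subnKC ?modnDr. Qed.

Lemma arcs_meet k r x : uniq c -> r <= size c ->
  x \in win k r.+1 -> x \in win (k + r) (size c - r).+1 ->
  x = cyc c d k \/ x = cyc c d (k + r).
Proof.
move=> hu hr; rewrite !win_S cyc_round // !mem_cat !inE.
case/orP=> [hx1|/eqP ->]; last by right.
case/orP=> [hx2|/eqP ->]; last by left.
by case: (win_disjoint hu _ hx1 hx2); rewrite subnKC.
Qed.

Lemma arcs_cover k r : 0 < size c -> r <= size c ->
  c =i win k r.+1 ++ win (k + r) (size c - r).+1.
Proof.
move=> h0 hr x; apply/idP/idP; last by rewrite mem_cat => /orP [] /win_sub; apply.
rewrite (win_cover k h0 hr) !win_S !mem_cat.
by case/orP=> ->; rewrite ?orbT.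
Qed.

End CyclicIndexing.

Section HolesAndPaths.
Variables (T : finType) (e : rel T).

Lemma cyc_adj c d a b : is_hole e c ->
  e (cyc c d a) (cyc c d b) <->
  (a %% size c = b.+1 %% size c \/ b %% size c = a.+1 %% size c).
Proof.
move=> [h4 [_ hadj]]; have h0 : 0 < size c by lia.
by rewrite /cyc hadj ?ltn_pmod // !modnS_mod.
Qed.

Lemma cyc_adj_succ c d a : is_hole e c -> e (cyc c d a) (cyc c d a.+1).
Proof. by move=> hH; apply/(cyc_adj _ _ _ hH); right. Qed.

Lemma win_adj c d k t t' : is_hole e c -> t < size c -> t.+1 < size c ->
  t'.+1 < size c ->
  e (cyc c d (k + t)) (cyc c d (k + t')) <-> (t = t'.+1 \/ t' = t.+1).
Proof.
move=> hH ht ht2 ht'; rewrite cyc_adj // -!addnS.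
split; last by case=> ->; [left|right].
by case=> /addn_modn_inj h; [left|right]; apply: h; lia.
Qed.

Lemma win_path c d k m : is_hole e c -> 0 < m -> m < size c ->
  path_ab e (win c d k m) (cyc c d k) (cyc c d (k + m.-1)).
Proof.
move=> hH hm hmn; have hu := hH.2.1.
split; last by rewrite head_win // last_win.
split; first by case: m hm {hmn} => // m _.
split; first by apply: win_uniq => //; apply: ltnW.
move=> x0 i j; rewrite size_win => hi hj; rewrite !nth_win //.
apply: win_adj => //; lia.
Qed.

Lemma path_ab_rev p a b : path_ab e p a b -> path_ab e (rev p) b a.
Proof.
move=> [[hn [hu ha]] hends]; split.
  split; first by move/(f_equal size); rewrite size_rev /=; case: (p) hn.
  split; first by rewrite rev_uniq.
  by move=> x0 i j; rewrite size_rev => hi hj; rewrite !nth_rev // ha; lia.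
case/lastP: p hn {hu ha} hends => // q z _ [].
rewrite last_rcons rev_rcons => hd <-; split=> //=.
by case: q hd => [|y q] //=; rewrite rev_cons last_rcons.
Qed.

Hypotheses (esym : symmetric e) (eirr : irreflexive e).

Lemma hole_close p a b w : path_ab e p a b -> 3 <= size p -> w \notin p ->
  (forall y, y \in p -> (e w y <-> y = a \/ y = b)) -> is_hole e (w :: p).
Proof.
move=> [[hn [hu ha]] [hd hl]] h3 hw hN.
split; first by rewrite /=; lia.
split; first by rewrite /= hw hu.
have h0 : 0 < size p by lia.
have hl' : (size p).-1 < size p by lia.
have hnth x0 t : t < size p -> (e w (nth x0 p t) <-> t = 0 \/ t = (size p).-1).
  move=> ht; rewrite hN ?mem_nth // -[in X in _ \/ X]hl -[in X in X \/ _]hd.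
  rewrite -(nth0 a) -(nth_last a) (set_nth_default x0 a h0).
  rewrite (set_nth_default x0 a hl').
  split; last by case=> ->; [left|right].
  by case=> /eqP; rewrite nth_uniq // => /eqP h; [left|right].
have hwrap t : t < (size p).+1 -> t.+1 %% (size p).+1 = if t == size p then 0 else t.+1.
  move=> ht; case: eqP => [->|hne]; first by rewrite modnn.
  by rewrite modn_small; lia.
move=> x0 [|i] [|j] /= hi hj; rewrite ?hwrap //.
- by rewrite eirr; case: eqP => ?; split=> // ?; lia.
- by rewrite hnth; [case: eqP => ?; case: eqP => ?; split; lia | lia].
- by rewrite esym hnth; [case: eqP => ?; case: eqP => ?; split; lia | lia].
- by rewrite ha; [case: eqP => ?; case: eqP => ?; split; lia | lia | lia].
Qed.

Lemma induces_hole_eq s s' : s =i s' -> induces_hole e s -> induces_hole e s'.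
Proof. by move=> hs [h [hH hh]]; exists h; split=> // x; rewrite hh hs. Qed.

Lemma path_ab_ends p a b : path_ab e p a b -> a \in p /\ b \in p.
Proof. by case: p => [[[]] //|x p] [_ [/= -> <-]]; rewrite mem_head mem_last. Qed.

End HolesAndPaths.

Section Theta.
Variables (T : finType) (e : rel T).
Hypotheses (esym : symmetric e) (eirr : irreflexive e).

Lemma path3 x y z : x != z -> e x y -> e y z -> ~~ e x z -> is_path e [:: x; y; z].
Proof.
move=> hxz exy eyz nxz.
have hxy : x != y by apply: contraTneq exy => ->; rewrite eirr.
have hyz : y != z by apply: contraTneq eyz => ->; rewrite eirr.
split=> //; split; first by rewrite /= !inE !negb_or hxy hyz hxz.
have eyx : e y x by rewrite esym.
have ezy : e z y by rewrite esym.
have nzx : ~~ e z x by rewrite esym.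
move=> x0 [|[|[|i]]] [|[|[|j]]] //= _ _;
  rewrite ?eirr ?exy ?eyz ?eyx ?ezy ?(negbTE nxz) ?(negbTE nzx);
  by split=> // ?; lia.
Qed.

Lemma mem_apex (p : seq T) x y w : x \in p -> y \in p ->
  p ++ [:: x; w; y] =i w :: p.
Proof.
move=> hx hy z; rewrite mem_cat !inE.
case: (z =P x) => [->|_]; first by rewrite hx orbT.
case: (z =P y) => [->|_]; first by rewrite hy orbT.
by rewrite /= !orbF orbC.
Qed.

Lemma apex_hole P a b w : path_ab e P a b -> 3 <= size P -> w \notin P ->
  (forall y, y \in P -> (e w y <-> y = a \/ y = b)) ->
  induces_hole e (P ++ [:: a; w; b]).
Proof.
move=> hP h3 hw hN; have [ha hb] := path_ab_ends hP.
apply: (induces_hole_eq (s := w :: P)); first by move=> z; rewrite mem_apex.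
by exists (w :: P); split=> //; apply: (hole_close esym eirr hP).
Qed.

(* The theta of a hole c and a vertex w attached to c exactly at the vertices
   at positions k and k + r, with 2 <= r <= size c - 2: its three paths are
   the two arcs of c between these vertices and the path through w. *)
Lemma theta_of_arcs c k r w : is_hole e c -> w \notin c ->
  1 < r -> r.+1 < size c ->
  (forall z, z \in c -> (e w z <-> z = cyc c w k \/ z = cyc c w (k + r))) ->
  has_theta e.
Proof.
move=> hH hw hr1 hrn hN; have [h4 [hu _]] := hH.
have h0 : 0 < size c by lia.
have hr : r <= size c by apply: ltnW; apply: ltnW.
set x1 := cyc c w k in hN *; set x2 := cyc c w (k + r) in hN *.
set P1 := win c w k r.+1; set W := win c w (k + r) (size c - r).+1.
have hP1 : path_ab e P1 x1 x2 by apply: win_path.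
have hP3 : path_ab e (rev W) x1 x2.
  by apply: path_ab_rev; rewrite /x1 -(cyc_round w k hr); apply: win_path => //; lia.
have hP1c z : z \in P1 -> z \in c by apply: win_sub.
have hP3c z : z \in rev W -> z \in c by rewrite mem_rev; apply: win_sub.
have ex1 : x1 = cyc c w (k + 0) by rewrite addn0.
have nx12 : ~~ e x1 x2.
  apply/negP; rewrite ex1 /x2.
  move/(win_adj w k (t := 0) (t' := r) hH ltac:(lia) ltac:(lia) hrn).
  by case=> //; lia.
have hx12 : x1 != x2.
  by rewrite ex1 /x2 cyc_offset_neq // ?ltn0Sn; [exact: ltnW | rewrite eq_sym -lt0n ltnW].
have hP2 : path_ab e [:: x1; w; x2] x1 x2.
  split=> //; apply: path3 hx12 _ _ nx12; last by apply/hN; [apply: cyc_in | right].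
  by rewrite esym; apply/hN; [apply: cyc_in | left].
have hP2w z : z \in [:: x1; w; x2] -> z \in c -> z = x1 \/ z = x2.
  by rewrite !inE => /or3P [] /eqP -> //; [left | rewrite (negbTE hw) | right].
exists x1, x2, P1, [:: x1; w; x2], (rev W).
split; first by apply/eqP.
do 4 split=> //.
split; first by move=> z /hP1c hz /hP2w; apply.
split; first by move=> z hz1; rewrite mem_rev; apply: arcs_meet.
split; first by move=> z hz /hP3c /(hP2w z hz).
split.
  apply: apex_hole => //; first by rewrite size_win.
    by apply: contra hw; apply: hP1c.
  by move=> y /hP1c; apply: hN.
split.
  exists c; split=> // z; rewrite (arcs_cover w k h0 hr) !mem_cat mem_rev.
  by rewrite -/P1 -/W.
apply: (induces_hole_eq (s := rev W ++ [:: x1; w; x2])).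
  by move=> z; rewrite !mem_cat orbC.
apply: apex_hole => //; first by rewrite size_rev size_win ltnS ltn_subRL addn1.
  by apply: contra hw; apply: hP3c.
by move=> y /hP3c; apply: hN.
Qed.

Lemma theta_of_two_nbrs c w a b : is_hole e c -> w \notin c -> a \in c -> b \in c ->
  a != b -> ~~ e a b -> (forall z, z \in c -> (e w z <-> z = a \/ z = b)) ->
  has_theta e.
Proof.
move=> hH hw ha hb hab nab hN.
have [p _ ea] := in_cyc w 0 ha; rewrite add0n in ea.
have [r hr eb] := in_cyc w p hb.
apply: (theta_of_arcs (k := p) (r := r) hH hw); last by rewrite -ea -eb.
  case: r hr eb => [|[|r]] hr eb //.
    by move: hab; rewrite ea eb addn0 eqxx.
  by move: nab; rewrite ea eb addn1 cyc_adj_succ.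
rewrite ltn_neqAle hr andbT; apply: contra nab => /eqP hrn.
have := cyc_adj_succ w (p + r) hH; rewrite -addnS hrn -eb esym.
by rewrite (@cyc_eqmod _ _ _ _ p) ?modnDr -?ea.
Qed.

End Theta.

Definition nbrs (T : finType) (e : rel T) (c : seq T) (w : T) : {set T} :=
  [set x in c | e w x].

Section Neighbours.
Variables (T : finType) (e : rel T).
Hypotheses (esym : symmetric e) (eirr : irreflexive e).

Lemma minor_of_edge c w t : is_hole e c -> has_nbr_in e c w ->
  (forall y, y \in c -> e w y -> y = cyc c w t \/ y = cyc c w t.+1) ->
  minor e c w.
Proof.
move=> [h4 _] hn hN; split=> //; exists (t %% size c).
split; first by rewrite ltn_pmod //; lia.
move=> y hy ey; case: (hN y hy ey) => ->; [left | right; left]; apply: cyc_eqmod.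
  by rewrite modn_mod.
by rewrite modnS_mod.
Qed.

(* In a theta-free graph a major vertex has at least three neighbours on the
   hole: with at most two, they are one vertex or an edge of the hole (so the
   vertex is minor), or two nonadjacent vertices (a theta). *)
Lemma major_three_nbrs c w : ~ has_theta e -> is_hole e c -> w \notin c ->
  major e c w -> 2 < #|nbrs e c w|.
Proof.
move=> hth hH hw [hn hmin]; rewrite ltnNge; apply/negP=> hle; apply: hmin.
have inN y : (y \in nbrs e c w) = (y \in c) && e w y by rewrite inE.
have [x0 [hx0 ex0]] := hn.
have : 0 < #|nbrs e c w| by apply/card_gt0P; exists x0; rewrite inN hx0.
case: (ltngtP #|nbrs e c w| 1) => // [h2 _ | /eqP/cards1P [a hN] _].
  have /cards2P [a [b [hab hN]]] : #|nbrs e c w| == 2 by rewrite eqn_leq hle.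
  have /andP [ha ewa] : (a \in c) && e w a by rewrite -inN hN !inE eqxx.
  have /andP [hb ewb] : (b \in c) && e w b by rewrite -inN hN !inE eqxx orbT.
  have hab' y : y \in c -> e w y -> y = a \/ y = b.
    move=> hy ey; have : y \in nbrs e c w by rewrite inN hy ey.
    by rewrite hN !inE => /orP [] /eqP; auto.
  have [eab|nab] := boolP (e a b); last first.
    case: (hth (theta_of_two_nbrs esym eirr hH hw ha hb hab nab _)) => z hz.
    by split; [apply: hab' | case=> ->].
  have [ta _ ea] := in_cyc w 0 ha; have [tb _ eb] := in_cyc w 0 hb.
  rewrite add0n in ea eb; move: eab; rewrite ea eb => /(cyc_adj _ _ _ hH) [hm|hm].
    apply: (minor_of_edge (t := tb) hH hn) => y hy ey.
    by case: (hab' y hy ey) => ->; [right; rewrite ea; apply: cyc_eqmod | left].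
  apply: (minor_of_edge (t := ta) hH hn) => y hy ey.
  by case: (hab' y hy ey) => ->; [left | right; rewrite eb; apply: cyc_eqmod].
have /andP [ha _] : (a \in c) && e w a by rewrite -inN hN inE.
have [t _ ea] := in_cyc w 0 ha; rewrite add0n in ea.
apply: (minor_of_edge (t := t) hH hn) => y hy ey; left.
have : y \in nbrs e c w by rewrite inN hy ey.
by rewrite hN inE ea => /eqP.
Qed.

Lemma clone_three_nbrs c w : is_hole e c -> is_clone e c w -> 2 < #|nbrs e c w|.
Proof.
move=> [h4 [hu _]] [y [_ [i [_ [_ hiff]]]]].
have hN x : x = cyc c w i \/ x = cyc c w i.+1 \/ x = cyc c w i.+2 -> x \in nbrs e c w.
  by move/hiff=> [hx ex]; rewrite inE hx ex.
have e0 : cyc c w i = cyc c w (i + 0) by rewrite addn0.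
have e1 : cyc c w i.+1 = cyc c w (i + 1) by rewrite addn1.
have e2 : cyc c w i.+2 = cyc c w (i + 2) by rewrite addn2.
apply/card_gt2P; exists (cyc c w i), (cyc c w i.+1), (cyc c w i.+2).
split; first by split; apply: hN; auto.
by rewrite e0 e1 e2; split; apply: cyc_offset_neq => //; apply: (leq_trans _ h4).
Qed.
End Neighbours.

Section Splitting.
Variables (T : finType) (e : rel T).

Lemma arc_lengths i j n : i < n -> j < n -> i <> j ->
  [/\ 0 < (j + n - i) %% n, (j + n - i) %% n < n,
      (i + (j + n - i) %% n) %% n = j & (i + n - j) %% n = n - (j + n - i) %% n].
Proof.
move=> hi hj hij; case: (ltnP i j) => h.
  have -> : (j + n - i) %% n = j - i by rewrite modn_sub_big; lia.
  by rewrite !modn_small; try split; lia.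
have -> : (j + n - i) %% n = j + n - i by rewrite modn_small; lia.
by rewrite !modn_sub_big; try split; lia.
Qed.

Lemma nested_positions c u v : is_hole e c -> nested e c u v ->
  exists i d, [/\ 0 < d, d < size c,
    (forall x, x \in nbrs e c u -> exists2 s, s <= d & x = cyc c u (i + s)) &
    (forall x, x \in nbrs e c v -> exists2 s, d <= s <= size c & x = cyc c u (i + s))].
Proof.
move=> [h4 _] [i [j [hi [hj [hij [hU hV]]]]]].
have [hd0 hdn hid hjd] := arc_lengths hi hj hij.
exists i, ((j + size c - i) %% size c); split=> // x; rewrite inE => /andP [hx ex].
  by have [s [hs ->]] := hU x hx ex; exists s.
have [s [hs ->]] := hV x hx ex; rewrite hjd in hs.
exists ((j + size c - i) %% size c + s); first by apply/andP; split; lia.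
by apply: cyc_eqmod; rewrite addnA -[RHS]modnDml hid.
Qed.

(* Each shared end c_i, c_(i+d) of the two arcs is
   adjacent to at most one of u, v and is given to that one. *)
Lemma nested_split c u v : is_hole e c -> nested e c u v ->
  (forall x, x \in nbrs e c u -> x \in nbrs e c v -> False) ->
  nbrs e c u != set0 -> nbrs e c v != set0 ->
  exists k m, [/\ 0 < m, m < size c,
    {subset nbrs e c u <= win c u k m} &
    {subset nbrs e c v <= win c u (k + m) (size c - m)}].
Proof.
move=> hH hnest hnot /set0Pn [x0 hx0] /set0Pn [y0 hy0].
have [i [d [hd0 hdn hU hV]]] := nested_positions hH hnest.
set lo : bool := cyc c u (i + 0) \in nbrs e c v.
set hb : bool := cyc c u (i + d) \in nbrs e c v.
have hUs x : x \in nbrs e c u -> exists2 s, lo <= s <= d - hb & x = cyc c u (i + s).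
  move=> hx; have [s hs ex] := hU x hx; exists s => //.
  have h0 : s = 0 -> ~~ lo.
    by move=> hs0; apply/negP; rewrite /lo -hs0 -ex; apply: hnot.
  have hd : s = d -> ~~ hb.
    by move=> hsd; apply/negP; rewrite /hb -hsd -ex; apply: hnot.
  lia.
have hVs x : x \in nbrs e c v ->
    exists2 s, d.+1 - hb <= s < size c + lo & x = cyc c u (i + s).
  move=> hx; have [s hs ex] := hV x hx; exists s => //.
  have hd : s = d -> hb by move=> hsd; rewrite /hb -hsd -ex.
  have hn : s = size c -> lo.
    move=> hsn; rewrite /lo (_ : cyc c u (i + 0) = x) //.
    by rewrite ex hsn; apply: cyc_eqmod; rewrite addn0 modnDr.
  lia.
have [s0 hs0 _] := hUs x0 hx0; have [t0 ht0 _] := hVs y0 hy0.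
exists (i + lo), (d.+1 - hb - lo); split; try lia.
  move=> x /hUs [s hs ->]; apply/mem_win; exists (s - lo); first lia.
  by congr (cyc _ _ _); lia.
move=> x /hVs [s hs ->]; apply/mem_win; exists (s - (d.+1 - hb)); first lia.
by congr (cyc _ _ _); lia.
Qed.
End Splitting.

Section Turtle.
Variables (T : finType) (e : rel T).
Hypothesis esym : symmetric e.

Lemma card_le_count (A : {set T}) (p : pred T) (s : seq T) :
  (forall x, x \in A -> (x \in s) && p x) -> #|A| <= count p s.
Proof.
move=> hA; rewrite -size_filter; apply: leq_trans (card_size _).
by apply: subset_leq_card; apply/subsetP => x /hA; rewrite mem_filter andbC.
Qed.

(* If the hole c is the union of two consecutive windows P and Q, and the
   adjacent vertices u, v outside c have at least three neighbours on c, all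
   of them in P for u and all in Q for v, then P and the reversal of Q are
   the two paths of a turtle whose extra vertices are u and v. *)
Lemma turtle_of_windows c u v k m : is_hole e c -> u \notin c -> v \notin c ->
  e u v -> 0 < m -> m < size c ->
  {subset nbrs e c u <= win c u k m} ->
  {subset nbrs e c v <= win c u (k + m) (size c - m)} ->
  2 < #|nbrs e c u| -> 2 < #|nbrs e c v| -> has_turtle e.
Proof.
move=> hH hu hv huv hm0 hmn hU hV h3u h3v; have [h4 [huq _]] := hH.
have h0 : 0 < size c by lia.
set P := win c u k m; set Q := win c u (k + m) (size c - m).
have hdis z : z \in P -> z \in Q -> False.
  by apply: win_disjoint huq _; rewrite subnKC // ltnW.
have hPc z : z \in P -> z \in c by apply: win_sub.
have hQc z : z \in rev Q -> z \in c by rewrite mem_rev; apply: win_sub.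
have hcov : c =i P ++ rev Q.
  by move=> z; rewrite mem_cat mem_rev -mem_cat (win_cover u k h0 (ltnW hmn)).
have hnbr w z : z \in c -> e w z -> z \in nbrs e c w by move=> hz ez; rewrite inE hz ez.
exists (cyc c u k), (cyc c u (k + m.-1)),
  (cyc c u (k + m + (size c - m).-1)), (cyc c u (k + m)), u, v, P, (rev Q).
split; first exact: win_path.
split; first by apply: path_ab_rev; apply: win_path; rewrite ?subn_gt0 ?ltn_subrL ?hm0.
split; first by rewrite disjoint_has; apply/hasP=> -[z hz]; rewrite /= mem_rev; apply: hdis.
split.
  have hk : cyc c u (k + m + (size c - m).-1).+1 = cyc c u k.
    apply: cyc_eqmod; rewrite -addnS prednK ?subn_gt0 // -addnA subnKC ?modnDr //.
    exact: ltnW.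
  by rewrite esym -hk; apply: cyc_adj_succ.
split; first by have := cyc_adj_succ u (k + m.-1) hH; rewrite -addnS prednK.
split; first by exists c; split.
have hout w : w \notin c -> w \notin P ++ rev Q.
  by move=> hw; apply/negP=> hin; move/negP: hw; apply; exact: etrans (hcov w) hin.
split; first exact: hout.
split; first exact: hout.
split=> //.
split.
  apply: (leq_trans h3u); apply: card_le_count => x hx.
  by rewrite hU //; move: hx; rewrite inE => /andP [].
split.
  apply/hasP=> -[z hz ez]; apply: (hdis z); last by rewrite -mem_rev.
  by apply: hU; apply: hnbr => //; apply: hQc.
split.
  apply: (leq_trans h3v); apply: card_le_count => x hx.
  by rewrite mem_rev hV //; move: hx; rewrite inE => /andP [].
apply/hasP=> -[z hz ez]; apply: (hdis z) => //.
by apply: hV; apply: hnbr => //; apply: hPc.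
Qed.
End Turtle.

Theorem lemma2p5 (T : finType) (e : rel T)
  (esym : symmetric e) (eirr : irreflexive e) (hC : in_C e)
  (c : seq T) (hH : is_hole e c) (u v : T)
  (huH : u \notin c) (hvH : v \notin c)
  (hu : major e c u \/ is_clone e c u) (hv : major e c v \/ is_clone e c v)
  (hnest : nested e c u v) (huv : e u v) :
  exists w, w \in c /\ e u w /\ e v w.
Proof.
have [hth [_ [_ hturtle]]] := hC.
have three w : w \notin c -> major e c w \/ is_clone e c w -> 2 < #|nbrs e c w|.
  by move=> hw [hmaj | hcl]; [apply: major_three_nbrs | apply: clone_three_nbrs].
have h3u := three u huH hu; have h3v := three v hvH hv.
have nonempty w : 2 < #|nbrs e c w| -> nbrs e c w != set0.
  by move=> h; rewrite -card_gt0; apply: leq_trans h.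
case: (boolP [exists w, (w \in nbrs e c u) && (w \in nbrs e c v)]).
  case/existsP=> w /andP []; rewrite !inE => /andP [hw euw] /andP [_ evw].
  by exists w.
rewrite negb_exists => /forallP hno; exfalso; apply: hturtle.
have hsep x : x \in nbrs e c u -> x \in nbrs e c v -> False.
  by move=> hxu hxv; move: (hno x); rewrite hxu hxv.
have [k [m [hm0 hmn hU hV]]] :=
  nested_split hH hnest hsep (nonempty _ h3u) (nonempty _ h3v).
exact: (turtle_of_windows esym hH huH hvH huv hm0 hmn hU hV h3u h3v).
Qed.
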